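(* Let $\mathfrak g=\mathfrak{sl}_4(\mathbb C)$ with simple roots $\alpha_1,\alpha_2,\alpha_3$. Let $e=X_{\alpha_1}+X_{\alpha_2+\alpha_3}$ (orbit with partition $(3,1)$). Let $\mathfrak n_1$ be the span of $$H_{\alpha_1},\ H_{\alpha_2},\ X_{\alpha_1},\ X_{\alpha_2},\ X_{-\alpha_2},\ X_{-\alpha_1}+X_{\alpha_3},\ X_{-\alpha_3},\ X_{-\alpha_1-\alpha_2},\ X_{-\alpha_2-\alpha_3},\ X_{-\alpha_1-\alpha_2-\alpha_3}.$$ Then $\mathfrak n_1$ is a complement of $\mathfrak g^e$ in $\mathfrak g$ that is not $\operatorname{ad}h^+$-invariant, where $h^+=2H_{\alpha_1}+2H_{\alpha_2}+2H_{\alpha_3}$. Moreover, the transverse Poisson structure $\Lambda_{N_1}(q)$ on $N_1=e+\mathfrak n_1^\perp$ is not polynomial: some of its entries are rational functions of $q$ that are not polynomials.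
   Context: $(H_\alpha,X_\alpha,X_{-\alpha})$ denote Chevalley basis elements and $K$ is the Killing form. Transverse Poisson structure. Choose a basis $Z_1,\dots,Z_k$ of $\mathfrak g^e$ and a basis $X_1,\dots,X_p$ of the complement $\mathfrak n$. Let $(\overline{Z_i},\overline{X_j})$ be the $K$-dual basis, and identify $\mathfrak n^\perp$ with $\mathbb C^k$ via $q\mapsto\sum_s q_s\overline{Z_s}$. Define: - $C_N(q)_{l,m}=K(e+\sum_s q_s\overline{Z_s},[X_l,X_m])$; - $D_N(q)_{l,j}=K(\sum_s q_s\overline{Z_s},[X_l,Z_j])$; - $A_N(q)_{i,j}=K(\sum_s q_s\overline{Z_s},[Z_i,Z_j])$. Then $\Lambda_N(q)=A_N+{}^tD_N\,C_N^{-1}D_N$, defined where $C_N(q)$ is invertible; its entries are rational in $q$. *)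

From HB Require Import structures.
From mathcomp Require Import all_boot all_order all_algebra all_field.
From mathcomp Require Export mpoly.
Set Implicit Arguments. Unset Strict Implicit. Unset Printing Implicit Defensive.
Import Order.TTheory GRing.Theory Num.Theory.
Local Open Scope ring_scope.

Notation M4 := 'M[algC]_4.

(* Elementary matrix E_{ij} (indices 0..3) *)
Definition E (i j : nat) : M4 := delta_mx (inord i) (inord j).

Definition bra (x y : M4) : M4 := x *m y - y *m x.

Definition in_sl4 (x : M4) : Prop := \tr x = 0.

(* Killing form of sl_4: trace of ad x o ad y.  It is computed on gl_4 = sl_4 (+) C*1,
   which is an ad-invariant decomposition on whose second summand ad x o ad y vanishes,
   hence for x y in sl_4 this equals the trace on sl_4. *)
Definition Kill (x y : M4) : algC :=
  \sum_(i < 4) \sum_(j < 4) (bra x (bra y (delta_mx i j))) i j.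

Definition H (i : nat) : M4 := E i i - E i.+1 i.+1.   (* H_{alpha_{i+1}} *)
Definition Xa1 := E 0 1.   Definition Xa2 := E 1 2.   Definition Xa3 := E 2 3.
Definition Xa23 := E 1 3.
Definition Xm1 := E 1 0.   Definition Xm2 := E 2 1.   Definition Xm3 := E 3 2.
Definition Xm12 := E 2 0.  Definition Xm23 := E 3 1.  Definition Xm123 := E 3 0.

Definition nil_e : M4 := Xa1 + Xa23.

Definition hplus : M4 := 2%:R *: H 0 + 2%:R *: H 1 + 2%:R *: H 2.

Definition in_ge (x : M4) : Prop := in_sl4 x /\ bra x nil_e = 0.

Definition Xn (j : 'I_10) : M4 :=
  nth 0 [:: H 0; H 1; Xa1; Xa2; Xm2; Xm1 + Xa3; Xm3; Xm12; Xm23; Xm123] j.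

Definition in_n1 (x : M4) : Prop := exists c : 'I_10 -> algC, x = \sum_j c j *: Xn j.

Definition basis_ge (k : nat) (Z : 'I_k -> M4) : Prop :=
  (forall s, in_ge (Z s)) /\
  (forall c : 'I_k -> algC, \sum_s c s *: Z s = 0 -> forall s, c s = 0) /\
  (forall y, in_ge y -> exists c : 'I_k -> algC, y = \sum_s c s *: Z s).

(* Zb is the part of the K-dual basis of (Z, X) dual to Z *)
Definition dual_Z (k : nat) (Z Zb : 'I_k -> M4) : Prop :=
  (forall s, in_sl4 (Zb s)) /\
  (forall s i, Kill (Zb s) (Z i) = (s == i)%:R) /\
  (forall s j, Kill (Zb s) (Xn j) = 0).

Definition qZ (k : nat) (Zb : 'I_k -> M4) (q : 'I_k -> algC) : M4 :=
  \sum_s q s *: Zb s.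

Definition C_N (k : nat) (Zb : 'I_k -> M4) (q : 'I_k -> algC) : 'M[algC]_10 :=
  \matrix_(l, m) Kill (nil_e + qZ Zb q) (bra (Xn l) (Xn m)).
Definition D_N (k : nat) (Z Zb : 'I_k -> M4) (q : 'I_k -> algC) : 'M[algC]_(10, k) :=
  \matrix_(l, j) Kill (qZ Zb q) (bra (Xn l) (Z j)).
Definition A_N (k : nat) (Z Zb : 'I_k -> M4) (q : 'I_k -> algC) : 'M[algC]_k :=
  \matrix_(i, j) Kill (qZ Zb q) (bra (Z i) (Z j)).

Definition Lambda_N (k : nat) (Z Zb : 'I_k -> M4) (q : 'I_k -> algC) : 'M[algC]_k :=
  A_N Z Zb q + (D_N Z Zb q)^T *m invmx (C_N Zb q) *m D_N Z Zb q.

(** [n1] is cut out of [sl_4] by five linear equations on the matrix entries;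
    with this description, [g^e] meets [n1] trivially (via an explicit left
    inverse of [ad e] on [n1]), [g^e + n1 = sl_4], and the failure of
    [ad h+]-invariance are finite computations.  For the non-polynomiality, restrict [Lambda_N1]
    to the line of coordinates [q(t)] of
    [xi(t) = X_{-a1-a2} + X_{-a2-a3} + t (X_{-a3} - X_{a1})], which lies in
    [n1^perp].  There [C_N] is invertible for [t <> 1], and the bilinear
    combination of the entries of [Lambda_N1] pairing the coordinates of
    [X_{a1+a2}] and [X_{a1+a2+a3}] in the basis [Z] equals
    [16 (1 - 2t) / (1 - t)], which is not a polynomial in [t]; it would be
    one if every entry of [Lambda_N1] agreed with a polynomial. *)
From mathcomp Require Import all_boot all_order all_algebra all_field.
From mathcomp Require Import mpoly ring.
From Stdlib Require Import Classical.
Set Implicit Arguments. Unset Strict Implicit. Unset Printing Implicit Defensive.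
Import GRing.Theory Num.Theory.
Local Open Scope ring_scope.

Section TraceDelta.
Variables (R : comRingType) (n : nat).
Implicit Types x y M N : 'M[R]_n.

Lemma mulmx_deltaE M (i j a b : 'I_n) : (M *m delta_mx i j) a b = M a i * (j == b)%:R.
Proof.
rewrite mxE (bigD1 i) //= mxE eqxx /= big1 ?addr0; first by rewrite eq_sym.
by move=> l /negbTE nli; rewrite mxE nli mulr0.
Qed.

Lemma delta_mulmxE M (i j a b : 'I_n) : (delta_mx i j *m M) a b = (a == i)%:R * M j b.
Proof.
rewrite mxE (bigD1 j) //= mxE eqxx andbT big1 ?addr0 // => l /negbTE nlj.
by rewrite mxE nlj andbF mul0r.
Qed.

Lemma sum_mulmx_delta M : \sum_(i < n) \sum_(j < n) (M *m delta_mx i j) i j = n%:R * \tr M.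
Proof.
rewrite mulr_sumr; apply: eq_bigr => i _.
under eq_bigr => j _ do rewrite mulmx_deltaE eqxx mulr1.
by rewrite sumr_const card_ord mulr_natl.
Qed.

Lemma sum_delta_mulmx M : \sum_(i < n) \sum_(j < n) (delta_mx i j *m M) i j = n%:R * \tr M.
Proof.
rewrite exchange_big mulr_sumr; apply: eq_bigr => j _.
under eq_bigr => i _ do rewrite delta_mulmxE eqxx mul1r.
by rewrite sumr_const card_ord mulr_natl.
Qed.

Lemma sum_mulmx_delta_mulmx M N :
  \sum_(i < n) \sum_(j < n) (M *m delta_mx i j *m N) i j = \tr M * \tr N.
Proof.
rewrite mulr_suml; apply: eq_bigr => i _; rewrite mulr_sumr; apply: eq_bigr => j _.
rewrite -mulmxA mxE (bigD1 i) //= delta_mulmxE eqxx mul1r.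
rewrite big1 ?addr0 // => l /negbTE nli.
by rewrite delta_mulmxE nli mul0r mulr0.
Qed.

(* The left-hand side is the trace of [ad x \o ad y] on [gl_n], computed in
   the basis of matrix units. *)
Lemma trace_ad_ad_delta x y :
  \sum_(i < n) \sum_(j < n) (x *m (y *m delta_mx i j - delta_mx i j *m y)
                 - (y *m delta_mx i j - delta_mx i j *m y) *m x) i j
  = (n + n)%:R * \tr (x *m y) - 2%:R * \tr x * \tr y.
Proof.
have sumB (F G : 'I_n -> 'I_n -> 'M[R]_n) :
    \sum_(i < n) \sum_(j < n) (F i j - G i j) i j
    = \sum_(i < n) \sum_(j < n) F i j i j - \sum_(i < n) \sum_(j < n) G i j i j.
  rewrite -sumrB; apply: eq_bigr => i _.
  by rewrite -sumrB; apply: eq_bigr => j _; rewrite !mxE.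
under eq_bigr => i _ do under eq_bigr => j _ do
  rewrite mulmxBr mulmxBl !mulmxA -[delta_mx i j *m y *m x]mulmxA.
rewrite !sumB sum_mulmx_delta sum_delta_mulmx !sum_mulmx_delta_mulmx.
rewrite mxtrace_mulC natrD.
ring.
Qed.

Lemma mxtrace_mulmx_delta M (i j : 'I_n) : \tr (M *m delta_mx i j) = M j i.
Proof.
rewrite /mxtrace (bigD1 j) //= mulmx_deltaE eqxx mulr1 big1 ?addr0 // => a /negbTE naj.
by rewrite mulmx_deltaE eq_sym naj mulr0.
Qed.

Lemma mxtrace_delta (i j : 'I_n) : \tr (delta_mx i j : 'M[R]_n) = (i == j)%:R.
Proof. by rewrite -[delta_mx i j]mul1mx mxtrace_mulmx_delta mxE eq_sym. Qed.

End TraceDelta.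

Lemma trace_form_nondegenerate (R : numFieldType) n (d : 'M[R]_n) :
  \tr d = 0 -> (forall y, \tr y = 0 -> \tr (d *m y) = 0) -> d = 0.
Proof.
move=> tr_d d_perp.
have offdiag i j : i != j -> d i j = 0.
  move=> nij; rewrite -mxtrace_mulmx_delta d_perp // mxtrace_delta.
  by rewrite eq_sym (negbTE nij).
have diag i j : d i i = d j j.
  apply/eqP; rewrite -subr_eq0 -!mxtrace_mulmx_delta -raddfB -mulmxBr /=.
  by rewrite d_perp // raddfB /= !mxtrace_delta !eqxx subrr.
apply/matrixP => i j; rewrite mxE; have [<-{j}|/offdiag //] := eqVneq i j.
have : \tr d = n%:R * d i i.
  rewrite /mxtrace (eq_bigr (fun _ => d i i)) => [|j _]; last exact: diag.
  by rewrite sumr_const card_ord mulr_natl.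
rewrite tr_d => /esym/eqP; rewrite mulf_eq0 pnatr_eq0 => /orP[/eqP n0|/eqP //].
by have := leq_trans (ltn_ord i) (eq_leq n0).
Qed.

Lemma mpoly_on_line (R : comRingType) k (P : {mpoly R[k]}) (u v : 'I_k -> R) :
  exists p : {poly R}, forall t, P.@[fun s => u s + t * v s] = p.[t].
Proof.
exists (\sum_(m <- msupp P) (P@_m)%:P * \prod_i ((u i)%:P + (v i)%:P * 'X) ^+ m i).
move=> t; rewrite mevalE horner_sum; apply: eq_bigr => m _.
rewrite hornerM hornerC horner_prod; congr (_ * _); apply: eq_bigr => i _.
by rewrite horner_exp hornerD hornerC hornerM hornerC hornerX mulrC.
Qed.

Lemma mpoly_bilinear_entries (R : comRingType) k n (D : ('I_k -> R) -> Prop)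
    (L : ('I_k -> R) -> 'M[R]_n) (u : 'rV[R]_n) (v : 'cV[R]_n) :
  (forall i j, exists P : {mpoly R[k]}, forall q, D q -> L q i j = P.@[q]) ->
  exists P : {mpoly R[k]}, forall q, D q -> (u *m L q *m v) 0 0 = P.@[q].
Proof.
move=> entries_poly.
have /fin_all_exists[Pf PfE] i : exists Pi : 'I_n -> {mpoly R[k]},
    forall j q, D q -> L q i j = (Pi j).@[q].
  exact: fin_all_exists (entries_poly i).
exists (\sum_j \sum_i (u 0 i * v j 0) *: Pf i j) => q Dq.
rewrite mxE raddf_sum /=; apply: eq_bigr => j _.
rewrite mxE mulr_suml raddf_sum; apply: eq_bigr => i _.
by rewrite /= mevalZ -PfE //; ring.
Qed.

Lemma poly_eq_frac_root (R : numFieldType) (p f : {poly R}) :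
  (forall t, t != 1 -> p.[t] = f.[t] / (1 - t)) -> f.[1] = 0.
Proof.
move=> pE; set g := p * (1 - 'X) - f.
suff -> : f = p * (1 - 'X) by rewrite hornerM !hornerE subrr mulr0.
apply/eqP; rewrite eq_sym -subr_eq0; apply/eqP.
pose ts := [seq i.+2%:R : R | i <- iota 0 (size g)].
apply: (@roots_geq_poly_eq0 _ _ ts); last by rewrite size_map size_iota.
- apply/allP => _ /mapP[i _ ->]; rewrite /root !hornerE.
  have ne1 : i.+2%:R != 1 :> R by rewrite (_ : 1 = 1%:R) // eqr_nat.
  by rewrite pE // divfK ?subrr // subr_eq0 eq_sym.
- rewrite /ts map_inj_uniq ?iota_uniq // => a b /eqP.
  by rewrite eqr_nat => /eqP [->].
Qed.

Lemma Kill_trace x y : Kill x y = 8%:R * \tr (x *m y) - 2%:R * (\tr x * \tr y).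
Proof. by rewrite /Kill /bra trace_ad_ad_delta mulrA. Qed.

Lemma mxtrace_bra x y : \tr (bra x y) = 0.
Proof. by rewrite /bra raddfB /= mxtrace_mulC subrr. Qed.

Lemma Kill_bra x y z : Kill x (bra y z) = 8%:R * \tr (bra x y *m z).
Proof.
rewrite Kill_trace mxtrace_bra !mulr0 subr0 /bra mulmxBl mulmxBr !raddfB /=.
by rewrite !mulmxA [\tr (x *m z *m y)]mxtrace_mulC mulmxA.
Qed.

Lemma KillDl x y z : Kill (x + y) z = Kill x z + Kill y z.
Proof. rewrite !Kill_trace mulmxDl !mxtraceD; ring. Qed.
Lemma KillDr x y z : Kill x (y + z) = Kill x y + Kill x z.
Proof. rewrite !Kill_trace mulmxDr !mxtraceD; ring. Qed.
Lemma KillZl a x y : Kill (a *: x) y = a * Kill x y.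
Proof. rewrite !Kill_trace -scalemxAl !mxtraceZ; ring. Qed.
Lemma KillZr a x y : Kill x (a *: y) = a * Kill x y.
Proof. rewrite !Kill_trace -scalemxAr !mxtraceZ; ring. Qed.
Lemma KillBl x y z : Kill (x - y) z = Kill x z - Kill y z.
Proof. by rewrite KillDl -scaleN1r KillZl mulN1r. Qed.
Lemma Kill0l x : Kill 0 x = 0.
Proof. by rewrite -(scale0r 0) KillZl mul0r. Qed.
Lemma Kill0r x : Kill x 0 = 0.
Proof. by rewrite -(scale0r 0) KillZr mul0r. Qed.

Lemma Kill_suml I r (P : pred I) (F : I -> M4) y :
  Kill (\sum_(i <- r | P i) F i) y = \sum_(i <- r | P i) Kill (F i) y.
Proof. exact: (big_morph (Kill^~ y) (fun a b => KillDl a b y) (Kill0l y)). Qed.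
Lemma Kill_sumr I r (P : pred I) (F : I -> M4) x :
  Kill x (\sum_(i <- r | P i) F i) = \sum_(i <- r | P i) Kill x (F i).
Proof. exact: (big_morph (Kill x) (KillDr x) (Kill0r x)). Qed.

Lemma braDr x y z : bra x (y + z) = bra x y + bra x z.
Proof. by rewrite /bra mulmxDr mulmxDl opprD addrACA. Qed.
Lemma braDl x y z : bra (x + y) z = bra x z + bra y z.
Proof. by rewrite /bra mulmxDr mulmxDl opprD addrACA. Qed.
Lemma braZl a x y : bra (a *: x) y = a *: bra x y.
Proof. by rewrite /bra scalerBr -scalemxAl -scalemxAr. Qed.
Lemma braZr a x y : bra x (a *: y) = a *: bra x y.
Proof. by rewrite /bra scalerBr -scalemxAr -scalemxAl. Qed.
Lemma bra0r x : bra x 0 = 0.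
Proof. by rewrite /bra mulmx0 mul0mx subrr. Qed.
Lemma bra0l x : bra 0 x = 0.
Proof. by rewrite /bra mulmx0 mul0mx subrr. Qed.

Lemma bra_suml I r (P : pred I) (F : I -> M4) y :
  bra (\sum_(i <- r | P i) F i) y = \sum_(i <- r | P i) bra (F i) y.
Proof. exact: (big_morph (bra^~ y) (fun a b => braDl a b y) (bra0l y)). Qed.

Lemma bra_sumr I r (P : pred I) (F : I -> M4) x :
  bra x (\sum_(i <- r | P i) F i) = \sum_(i <- r | P i) bra x (F i).
Proof. exact: (big_morph (bra x) (braDr x) (bra0r x)). Qed.

Lemma Kill_nondegenerate d :
  in_sl4 d -> (forall y, in_sl4 y -> Kill d y = 0) -> d = 0.
Proof.
rewrite /in_sl4 => tr_d d_perp; apply: trace_form_nondegenerate => // y tr_y.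
have := d_perp y tr_y; rewrite Kill_trace tr_d tr_y !mulr0 subr0.
by move/eqP; rewrite mulf_eq0 pnatr_eq0 => /eqP.
Qed.

Lemma in_sl4B x y : in_sl4 x -> in_sl4 y -> in_sl4 (x - y).
Proof. by rewrite /in_sl4 => tx ty; rewrite mxtraceD -scaleN1r mxtraceZ tx ty mulr0 addr0. Qed.

Lemma in_sl4_sum k (c : 'I_k -> algC) (F : 'I_k -> M4) :
  (forall s, in_sl4 (F s)) -> in_sl4 (\sum_s c s *: F s).
Proof.
rewrite /in_sl4 => tF; elim/big_rec: _ => [|s a _ ta]; first exact: mxtrace0.
by rewrite mxtraceD ta mxtraceZ (tF s : \tr _ = 0) mulr0 addr0.
Qed.

Definition mx4 (f : nat -> nat -> algC) : M4 := \matrix_(i < 4, j < 4) f i j.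

Section Mx4.
Implicit Types f g : nat -> nat -> algC.

Lemma mx4D f g : mx4 f + mx4 g = mx4 (fun i j => f i j + g i j).
Proof. by apply/matrixP => i j; rewrite !mxE. Qed.
Lemma mx4B f g : mx4 f - mx4 g = mx4 (fun i j => f i j - g i j).
Proof. by apply/matrixP => i j; rewrite !mxE. Qed.
Lemma mx4Z a f : a *: mx4 f = mx4 (fun i j => a * f i j).
Proof. by apply/matrixP => i j; rewrite !mxE. Qed.
Lemma mx4M f g : mx4 f *m mx4 g =
  mx4 (fun i j => f i 0%N * g 0%N j + f i 1%N * g 1%N j + f i 2%N * g 2%N j + f i 3%N * g 3%N j).
Proof. by apply/matrixP => i j; rewrite !mxE !big_ord_recr big_ord0 /= add0r !mxE. Qed.
Lemma mx4_trace f : \tr (mx4 f) = f 0%N 0%N + f 1%N 1%N + f 2%N 2%N + f 3%N 3%N.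
Proof. by rewrite /mxtrace !big_ord_recr big_ord0 /= add0r !mxE. Qed.
Lemma E_mx4 a b : (a < 4)%N -> (b < 4)%N ->
  E a b = mx4 (fun i j => ((i == a) && (j == b))%:R).
Proof. by move=> a4 b4; apply/matrixP => i j; rewrite !mxE -!val_eqE /= !inordK. Qed.
Lemma mx4_entries (x : M4) : x = mx4 (fun i j => x (inord i) (inord j)).
Proof. by apply/matrixP => i j; rewrite !mxE !inord_val. Qed.
Lemma eq_mx4 f g : (forall i j, (i < 4)%N -> (j < 4)%N -> f i j = g i j) -> mx4 f = mx4 g.
Proof. by move=> fg; apply/matrixP => i j; rewrite !mxE fg. Qed.

End Mx4.

Ltac unfold_sl4 :=
  rewrite /Xn /nil_e /hplus /H /Xa1 /Xa2 /Xa3 /Xa23 /Xm1 /Xm2 /Xm3 /Xm12 /Xm23 /Xm123 /bra /=.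

Ltac mx4_simpl :=
  rewrite ?E_mx4 //; repeat progress rewrite ?mx4M ?mx4B ?mx4D ?mx4Z ?mx4_trace.

Ltac mx4_ext := apply: eq_mx4 => [[|[|[|[|?]]]] [|[|[|[|?]]]] ? ?] //=.

Definition ent (x : M4) (i j : nat) : algC := x (inord i) (inord j).

Lemma ent_mx4 f i j : (i < 4)%N -> (j < 4)%N -> ent (mx4 f) i j = f i j.
Proof. by move=> i4 j4; rewrite /ent mxE !inordK. Qed.

Lemma mxtrace_ent x : \tr x = ent x 0 0 + ent x 1 1 + ent x 2 2 + ent x 3 3.
Proof. by rewrite {1}[x]mx4_entries mx4_trace. Qed.

Lemma ent22_sl4 x : in_sl4 x -> ent x 3 3 = 0 -> ent x 2 2 = - (ent x 0 0 + ent x 1 1).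
Proof.
rewrite /in_sl4 mxtrace_ent => + x33; rewrite x33 addr0 addrC => /eqP.
by rewrite addr_eq0 => /eqP.
Qed.

Lemma in_n1P x : in_n1 x <->
  in_sl4 x /\
  [/\ ent x 0 2 = 0, ent x 0 3 = 0, ent x 1 3 = 0, ent x 3 3 = 0 & ent x 1 0 = ent x 2 3].
Proof.
rewrite /in_sl4; split.
  move=> [c ->]; rewrite !big_ord_recl big_ord0 addr0 /=.
  by unfold_sl4; mx4_simpl; rewrite !ent_mx4 //=; split; [|split]; ring.
move=> [tr_x [x02 x03 x13 x33 x10]].
have x22 := ent22_sl4 tr_x x33.
exists (fun j => nth 0 [:: ent x 0 0; ent x 0 0 + ent x 1 1; ent x 0 1; ent x 1 2;
  ent x 2 1; ent x 1 0; ent x 3 2; ent x 2 0; ent x 3 1; ent x 3 0] j).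
rewrite !big_ord_recl big_ord0 addr0 /=; unfold_sl4; mx4_simpl.
rewrite /ent in x02 x03 x13 x33 x22 x10 *; rewrite [LHS]mx4_entries; mx4_ext;
  rewrite ?x02 ?x03 ?x13 ?x33 ?x22 ?x10; ring.
Qed.

Definition ad_e_retraction (B : M4) : M4 :=
  mx4 (fun i j => nth 0 (nth [::]
    [:: [:: ent B 0 1 + ent B 1 3; ent B 0 3; 0; 0];
        [:: - ent B 0 0; ent B 1 3; - ent B 0 2; 0];
        [:: ent B 2 1; ent B 2 3; - ent B 0 1 - 2%:R * ent B 1 3; - ent B 0 0];
        [:: - ent B 1 0; - ent B 0 0 - ent B 1 1; - ent B 1 2; 0]] i) j).

Lemma ad_e_retractionK x : in_n1 x -> ad_e_retraction (bra x nil_e) = x.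
Proof.
move=> /in_n1P[tr_x [x02 x03 x13 x33 x10]].
have x22 := ent22_sl4 tr_x x33.
rewrite /ad_e_retraction [in LHS](mx4_entries x); unfold_sl4; mx4_simpl.
rewrite !ent_mx4 // /ent in x02 x03 x13 x33 x22 x10 *; rewrite [RHS]mx4_entries.
by mx4_ext; rewrite ?x02 ?x03 ?x13 ?x33 ?x22 ?x10; ring.
Qed.

Lemma ge_n1_trivial x : in_ge x -> in_n1 x -> x = 0.
Proof.
move=> [_ xe] /ad_e_retractionK <-; rewrite xe /ad_e_retraction [RHS]mx4_entries.
by mx4_ext; rewrite /ent !mxE; ring.
Qed.

Definition ge_part (x : M4) : M4 :=
  ent x 0 2 *: E 0 2 + ent x 0 3 *: E 0 3 + ent x 1 3 *: (E 0 1 + E 1 3)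
  + (ent x 2 3 - ent x 1 0) *: E 2 3
  + ent x 3 3 *: (E 0 0 + E 1 1 - 3%:R *: E 2 2 + E 3 3).

Lemma ge_part_ge x : in_ge (ge_part x).
Proof.
split; rewrite /in_sl4 /ge_part; unfold_sl4; mx4_simpl; first by rewrite /=; ring.
by rewrite [RHS]mx4_entries; mx4_ext; rewrite mxE; ring.
Qed.

Lemma sub_ge_part_n1 x : in_sl4 x -> in_n1 (x - ge_part x).
Proof.
move=> tr_x; apply/in_n1P; split.
  exact: in_sl4B tr_x (proj1 (ge_part_ge x)).
rewrite /ge_part [in X in ent X](mx4_entries x); mx4_simpl; rewrite !ent_mx4 //=.
by split; ring.
Qed.

Lemma sl4_ge_n1_decomposition x :
  in_sl4 x -> exists y z, in_ge y /\ in_n1 z /\ x = y + z.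
Proof.
move=> tr_x; exists (ge_part x), (x - ge_part x).
by split; [exact: ge_part_ge | split; [exact: sub_ge_part_n1 | rewrite addrC subrK]].
Qed.

Lemma n1_not_ad_hplus_stable : ~ (forall x, in_n1 x -> in_n1 (bra hplus x)).
Proof.
move=> stable.
have n1_X : in_n1 (Xm1 + Xa3).
  apply/in_n1P; rewrite /in_sl4; unfold_sl4; mx4_simpl; rewrite !ent_mx4 //=.
  by split; [|split]; ring.
have /in_n1P[_ [_ _ _ _ /eqP]] := stable _ n1_X; rewrite -subr_eq0.
have -> : ent (bra hplus (Xm1 + Xa3)) 1 0 - ent (bra hplus (Xm1 + Xa3)) 2 3 = - 4%:R.
  by unfold_sl4; mx4_simpl; rewrite !ent_mx4 //=; ring.
by rewrite oppr_eq0 pnatr_eq0.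
Qed.

Definition perp_line (t : algC) : M4 := E 2 0 + E 3 1 + t *: (E 3 2 - E 0 1).

Lemma perp_line_sl4 t : in_sl4 (perp_line t).
Proof. by rewrite /in_sl4 /perp_line; mx4_simpl; rewrite /=; ring. Qed.

Ltac case_ord10 i := case: i => [[|[|[|[|[|[|[|[|[|[|?]]]]]]]]]] ?] //.

Lemma Kill_perp_line_Xn t j : Kill (perp_line t) (Xn j) = 0.
Proof.
rewrite Kill_trace (perp_line_sl4 t : \tr _ = 0) mul0r mulr0 subr0 /perp_line.
by case_ord10 j; unfold_sl4; mx4_simpl; rewrite /=; ring.
Qed.

Definition mx10 (rows : seq (seq algC)) : 'M[algC]_10 :=
  \matrix_(i < 10, j < 10) nth 0 (nth [::] rows i) j.

Definition C_line (t : algC) : 'M[algC]_10 := mx10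
  [:: [:: 0; 0; 0; 0; 0; -2%:R + 2%:R * t; 0; 0; 1; 0];
      [:: 0; 0; 0; 0; 0; 1 - 2%:R * t; 0; 0; -1; 0];
      [:: 0; 0; 0; 1; 0; 0; 0; 0; 0; -1];
      [:: 0; 0; -1; 0; 0; 1; 0; 1 - t; 0; 0];
      [:: 0; 0; 0; 0; 0; 0; -1; 0; 0; 0];
      [:: 2%:R - 2%:R * t; -1 + 2%:R * t; 0; -1; 0; 0; 0; 0; 0; 0];
      [:: 0; 0; 0; 0; 1; 0; 0; 0; 0; 0];
      [:: 0; 0; 0; -1 + t; 0; 0; 0; 0; 0; 0];
      [:: -1; 1; 0; 0; 0; 0; 0; 0; 0; 0];
      [:: 0; 0; 1; 0; 0; 0; 0; 0; 0; 0]].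

Definition C_line_inv (t : algC) : 'M[algC]_10 := let u := (1 - t)^-1 in mx10
  [:: [:: 0; 0; 0; 0; 0; 1; 0; - u; 1 - 2%:R * t; 0];
      [:: 0; 0; 0; 0; 0; 1; 0; - u; 2%:R - 2%:R * t; 0];
      [:: 0; 0; 0; 0; 0; 0; 0; 0; 0; 1];
      [:: 0; 0; 0; 0; 0; 0; 0; - u; 0; 0];
      [:: 0; 0; 0; 0; 0; 0; 1; 0; 0; 0];
      [:: -1; -1; 0; 0; 0; 0; 0; 0; 0; 0];
      [:: 0; 0; 0; 0; -1; 0; 0; 0; 0; 0];
      [:: u; u; 0; u; 0; 0; 0; 0; 0; u];
      [:: -1 + 2%:R * t; -2%:R + 2%:R * t; 0; 0; 0; 0; 0; 0; 0; 0];
      [:: 0; 0; -1; 0; 0; 0; 0; - u; 0; 0]].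

Lemma Kill_C_line t l m :
  Kill (nil_e + perp_line t) (bra (Xn l) (Xn m)) = 8%:R * C_line t l m.
Proof.
rewrite Kill_bra /C_line /mx10 mxE; congr (_ * _); rewrite /perp_line.
by case_ord10 l; case_ord10 m; unfold_sl4; mx4_simpl; rewrite /=; ring.
Qed.

Lemma C_lineK t : t != 1 -> C_line t *m C_line_inv t = 1%:M.
Proof.
rewrite eq_sym -subr_eq0 => t1; apply/matrixP => i j.
rewrite !mxE !big_ord_recl big_ord0 addr0 /= !mxE.
by case_ord10 i; case_ord10 j; rewrite /=; field.
Qed.

Lemma E02_E03_ge : in_ge (E 0 2) /\ in_ge (E 0 3).
Proof.
split; split; rewrite /in_sl4; unfold_sl4; mx4_simpl; rewrite /=; try ring.
all: by rewrite [RHS]mx4_entries; mx4_ext; rewrite mxE; ring.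
Qed.

Definition a_col : 'cV[algC]_10 := \col_l nth 0 [:: 1; 1; 0; 0; 0; 0; 0; 0; 0; 0] l.
Definition b_col (t : algC) : 'cV[algC]_10 := \col_l nth 0 [:: 0; 0; 0; 0; 0; 1; -1; t; 0; 0] l.

Lemma Kill_perp_line_bra_E02 t l :
  Kill (perp_line t) (bra (Xn l) (E 0 2)) = 8%:R * a_col l 0.
Proof.
rewrite Kill_bra /a_col mxE; congr (_ * _); rewrite /perp_line.
by case_ord10 l; unfold_sl4; mx4_simpl; rewrite /=; ring.
Qed.

Lemma Kill_perp_line_bra_E03 t l :
  Kill (perp_line t) (bra (Xn l) (E 0 3)) = 8%:R * b_col t l 0.
Proof.
rewrite Kill_bra /b_col mxE; congr (_ * _); rewrite /perp_line.
by case_ord10 l; unfold_sl4; mx4_simpl; rewrite /=; ring.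
Qed.

Lemma Kill_perp_line_bra_E02_E03 t : Kill (perp_line t) (bra (E 0 2) (E 0 3)) = 0.
Proof. by rewrite Kill_bra /perp_line; unfold_sl4; mx4_simpl; rewrite /=; ring. Qed.

Definition w_col (t : algC) : 'cV[algC]_10 := let u := (1 - t)^-1 in
  \col_l nth 0 [:: 1 - t * u; 1 - t * u; 0; - t * u; -1; 0; 0; 0; 0; - t * u] l.

Lemma C_line_inv_b t : C_line_inv t *m b_col t = w_col t.
Proof.
apply/colP => i; rewrite !mxE !big_ord_recl big_ord0 addr0.
by case_ord10 i; rewrite /= !mxE /=; ring.
Qed.

Lemma C_line_inv_form t :
  (a_col^T *m C_line_inv t *m b_col t) 0 0 = 2%:R * (1 - t / (1 - t)).
Proof.
rewrite -mulmxA C_line_inv_b mxE !big_ord_recl big_ord0 addr0 /= !mxE /=; ring.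
Qed.

Section DualBasis.
Variables (k : nat) (Z Zb : 'I_k -> M4).
Hypothesis Z_span : forall y, in_ge y -> exists c : 'I_k -> algC, y = \sum_s c s *: Z s.
Hypothesis Zb_sl4 : forall s, in_sl4 (Zb s).
Hypothesis Zb_Z : forall s i, Kill (Zb s) (Z i) = (s == i)%:R.
Hypothesis Zb_Xn : forall s j, Kill (Zb s) (Xn j) = 0.

Lemma Kill_qZ_Z q i : Kill (qZ Zb q) (Z i) = q i.
Proof.
rewrite /qZ Kill_suml (bigD1 i) //= KillZl Zb_Z eqxx mulr1 big1 ?addr0 //.
by move=> s /negbTE nsi; rewrite KillZl Zb_Z nsi mulr0.
Qed.

Lemma Kill_qZ_Xn q j : Kill (qZ Zb q) (Xn j) = 0.
Proof. by rewrite /qZ Kill_suml big1 // => s _; rewrite KillZl Zb_Xn mulr0. Qed.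

(* [x - qZ (Kill x \o Z)] is Killing-orthogonal to [g^e] and to [n1], hence to [sl_4]. *)
Lemma qZ_Kill_coords x : in_sl4 x -> (forall j, Kill x (Xn j) = 0) ->
  qZ Zb (fun s => Kill x (Z s)) = x.
Proof.
move=> x_sl4 x_perp; apply/eqP; rewrite eq_sym -subr_eq0; apply/eqP.
apply: Kill_nondegenerate => [|y].
  exact/in_sl4B/in_sl4_sum.
move=> /sl4_ge_n1_decomposition[y1 [z [/Z_span[c ->] [[d ->] ->]]]].
rewrite KillDr !Kill_sumr !big1 ?addr0 // => s _; rewrite KillZr KillBl.
  by rewrite Kill_qZ_Xn x_perp subrr mulr0.
by rewrite Kill_qZ_Z subrr mulr0.
Qed.

Definition q_line (t : algC) : 'I_k -> algC := fun s => Kill (perp_line t) (Z s).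

Lemma qZ_line t : qZ Zb (q_line t) = perp_line t.
Proof. exact: qZ_Kill_coords (perp_line_sl4 t) (Kill_perp_line_Xn t). Qed.

Lemma C_N_line t : C_N Zb (q_line t) = 8%:R *: C_line t.
Proof. by apply/matrixP => l m; rewrite [LHS]mxE qZ_line Kill_C_line [RHS]mxE. Qed.

Lemma C_N_lineK t : t != 1 -> C_N Zb (q_line t) *m ((8%:R)^-1 *: C_line_inv t) = 1%:M.
Proof.
move=> t1; rewrite C_N_line -scalemxAr -scalemxAl scalerA mulVf ?pnatr_eq0 //.
by rewrite scale1r C_lineK.
Qed.

Lemma C_N_line_unit t : t != 1 -> C_N Zb (q_line t) \in unitmx.
Proof. by move/C_N_lineK/mulmx1_unit => []. Qed.

Lemma invmx_C_N_line t : t != 1 -> invmx (C_N Zb (q_line t)) = (8%:R)^-1 *: C_line_inv t.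
Proof.
move=> t1; rewrite -[invmx _]mulmx1 -(C_N_lineK t1) mulmxA.
by rewrite mulVmx ?mul1mx ?C_N_line_unit.
Qed.

Variables (al be : 'I_k -> algC).
Hypothesis E02_al : E 0 2 = \sum_s al s *: Z s.
Hypothesis E03_be : E 0 3 = \sum_s be s *: Z s.

Lemma D_N_line_al t : D_N Z Zb (q_line t) *m \col_s al s = 8%:R *: a_col.
Proof.
apply/colP => l; rewrite [LHS]mxE [RHS]mxE -(Kill_perp_line_bra_E02 t) E02_al bra_sumr Kill_sumr.
by apply: eq_bigr => s _; rewrite !mxE qZ_line braZr KillZr mulrC.
Qed.

Lemma D_N_line_be t : D_N Z Zb (q_line t) *m \col_s be s = 8%:R *: b_col t.
Proof.
apply/colP => l; rewrite [LHS]mxE [RHS]mxE -(Kill_perp_line_bra_E03 t) E03_be bra_sumr Kill_sumr.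
by apply: eq_bigr => s _; rewrite !mxE qZ_line braZr KillZr mulrC.
Qed.

Lemma A_N_line_form t : ((\col_s al s)^T *m A_N Z Zb (q_line t) *m \col_s be s) 0 0 = 0.
Proof.
rewrite -(Kill_perp_line_bra_E02_E03 t) mxE E03_be bra_sumr Kill_sumr.
apply: eq_bigr => j _; rewrite braZr KillZr [(\col__ _) _ _]mxE mulrC; congr (_ * _).
rewrite mxE E02_al bra_suml Kill_sumr; apply: eq_bigr => i _.
by rewrite !mxE braZl KillZr qZ_line.
Qed.

Lemma Lambda_N_line_form t : t != 1 ->
  ((\col_s al s)^T *m Lambda_N Z Zb (q_line t) *m \col_s be s) 0 0
  = 16%:R * (1 - t / (1 - t)).
Proof.
move=> t1; rewrite /Lambda_N mulmxDr mulmxDl mxE A_N_line_form add0r.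
rewrite !mulmxA -trmx_mul -mulmxA D_N_line_al D_N_line_be invmx_C_N_line //.
rewrite !linearZ /= -!scalemxAl !scalerA mxE C_line_inv_form mulfV ?pnatr_eq0 //; ring.
Qed.
End DualBasis.

Lemma Lambda_N1_not_polynomial k (Z Zb : 'I_k -> M4) :
  basis_ge Z -> dual_Z Z Zb ->
  exists i j : 'I_k, ~ exists P : {mpoly algC[k]},
    forall q, C_N Zb q \in unitmx -> Lambda_N Z Zb q i j = P.@[q].
Proof.
move=> [_ [_ Z_span]] [Zb_sl4 [Zb_Z Zb_Xn]].
have [/Z_span[al E02_al] /Z_span[be E03_be]] := E02_E03_ge.
apply: NNPP => no_entry.
have entries_poly i j : exists P : {mpoly algC[k]},
    forall q, C_N Zb q \in unitmx -> Lambda_N Z Zb q i j = P.@[q].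
  by apply: NNPP => not_poly; apply: no_entry; exists i, j.
have [P PE] := mpoly_bilinear_entries (\col_s al s)^T (\col_s be s) entries_poly.
have [p pE] := mpoly_on_line P (fun s => Kill (E 2 0 + E 3 1) (Z s))
  (fun s => Kill (E 3 2 - E 0 1) (Z s)).
have /poly_eq_frac_root : forall t, t != 1 ->
    p.[t] = (16%:R%:P - 32%:R%:P * 'X).[t] / (1 - t).
  move=> t t1; rewrite -pE.
  have q_lineE : (fun s => Kill (E 2 0 + E 3 1) (Z s) + t * Kill (E 3 2 - E 0 1) (Z s))
      =1 q_line Z t by move=> s; rewrite /q_line /perp_line [RHS]KillDl KillZl.
  rewrite (meval_eq _ q_lineE) -PE ?C_N_line_unit //.
  rewrite Lambda_N_line_form // !hornerE; move: t1; rewrite eq_sym -subr_eq0 => t1.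
  by field.
by rewrite !hornerE ?mulr1 => /eqP; rewrite subr_eq0 eqr_nat.
Qed.

Theorem mainTheorem7 :
  ((forall x, in_ge x -> in_n1 x -> x = 0) /\
   (forall x, in_sl4 x -> exists y z, in_ge y /\ in_n1 z /\ x = y + z)) /\
  ~ (forall x, in_n1 x -> in_n1 (bra hplus x)) /\
  (forall (k : nat) (Z Zb : 'I_k -> M4),
     basis_ge Z -> dual_Z Z Zb ->
     exists i j : 'I_k, ~ exists P : {mpoly algC[k]},
       forall q : 'I_k -> algC, C_N Zb q \in unitmx ->
         Lambda_N Z Zb q i j = P.@[q]).
Proof.
split; first by split; [exact: ge_n1_trivial | exact: sl4_ge_n1_decomposition].
split; [exact: n1_not_ad_hplus_stable | exact: Lambda_N1_not_polynomial].
Qed.
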